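(* Let $k$ be a field of characteristic $p>0$ and $A$ a $k$-vector space of finite dimension $n\ge1$. For every $r\ge0$, $S_{\le r}A\neq\bigoplus_{0\le i\le r}S^iA$.
   Context: $SA=\bigoplus_{m\ge0}S^mA$ is the symmetric algebra of $A$ ($S^0A=k$, $S^mA$ the $m$-th symmetric power, with pure symmetric tensors $a_1\otimes_s\dots\otimes_s a_m$). The linear map $\partial\colon SA\to SA\otimes A$ is given by $\partial(\lambda)=0$ for $\lambda\in S^0A$ and $\partial(a_1\otimes_s\dots\otimes_s a_m)=\sum_{i=1}^m(a_1\otimes_s\dots\otimes_s a_{i-1}\otimes_s a_{i+1}\otimes_s\dots\otimes_s a_m)\otimes a_i$. Iterates: $\partial^0=1_{SA}$ and $\partial^{r+1}:=\partial;(\partial^r\otimes 1_A)\colon SA\to SA\otimes A^{\otimes(r+1)}$. Define $S_{\le r}A:=\ker(\partial^{r+1})\subseteq SA$. *)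

From HB Require Import structures.
From mathcomp Require Import all_boot all_order all_algebra.
From mathcomp Require Import mpoly.
Set Implicit Arguments. Unset Strict Implicit. Unset Printing Implicit Defensive.
Import GRing.Theory.
Local Open Scope ring_scope.

(* Model: A = k^n with standard basis e_0..e_{n-1}.  Then
   SA = k[X_0,...,X_{n-1}] = {mpoly k[n]}, where e_i corresponds to X_i and the
   symmetric product is polynomial multiplication; S^m A = homogeneous
   polynomials of total degree m.
   A^{(x) s} is identified with k^{n^s} (basis e_{i_1} (x) ... (x) e_{i_s}),
   so SA (x) A^{(x) s} = functions  s.-tuple 'I_n -> SA  (coefficient of each
   basis tensor). *)

Definition Spow (k : fieldType) (n m : nat) (f : {mpoly k[n]}) : Prop :=
  f \is ishomog1 m (@mdeg n).

(* partial : SA -> SA (x) A.  On a pure symmetric tensor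
   a_1 ... a_m  it gives  sum_i (prod_{j<>i} a_j) (x) a_i; in coordinates the
   e_i-component is the formal partial derivative d/dX_i. *)
Definition partial (k : fieldType) (n : nat) (f : {mpoly k[n]})
  : 'I_n -> {mpoly k[n]} := fun i => mderiv i f.

(* partial^{r} : SA -> SA (x) A^{(x) r}, with partial^0 = id and
   partial^{r+1} = partial ; (partial^r (x) 1_A).  The component at
   e_{i_1} (x) ... (x) e_{i_{r+1}} of partial^{r+1} f is
   (partial^r (d_{i_{r+1}} f))_{(i_1..i_r)}, i.e. the iterated derivative
   d_{i_1} ... d_{i_{r+1}} f (innermost = last index). *)
Definition partial_pow (k : fieldType) (n : nat) (f : {mpoly k[n]})
  (t : seq 'I_n) : {mpoly k[n]} :=
  foldr (fun i g => mderiv i g) f t.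

Definition S_le (k : fieldType) (n r : nat) (f : {mpoly k[n]}) : Prop :=
  forall t : r.+1.-tuple 'I_n, partial_pow f t = 0.

Definition in_Sum_le (k : fieldType) (n r : nat) (f : {mpoly k[n]}) : Prop :=
  exists g : 'I_r.+1 -> {mpoly k[n]},
    (forall i : 'I_r.+1, Spow (val i) (g i)) /\ f = \sum_(i < r.+1) g i.

From HB Require Import structures.
From mathcomp Require Import all_boot all_order all_algebra.
From mathcomp Require Import mpoly.
Import GRing.Theory.
Local Open Scope ring_scope.

(* In characteristic p every first derivative of X_0^(p(r+1)) carries the
   factor p(r+1) = 0, so this monomial is killed by partial and a fortiori by
   partial^(r+1): it lies in S_{<=r}A.  But it is homogeneous of degree
   p(r+1) > r, so its coefficient in any sum of components of degree <= r
   is 0, not 1. *)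

Lemma mderivXMn_pchar (R : nzRingType) (p : nat) (hp : p \in [pchar R])
  (n : nat) (m : 'X_{1..n}) (i : 'I_n) :
  mderiv i ('X_[m *+ p] : {mpoly R[n]}) = 0.
Proof. by rewrite mderivX mulmnE natrM (pcharf0 hp) mulr0 scale0r. Qed.

Section IteratedDerivatives.

Context {k : fieldType} {n : nat}.
Implicit Types (f : {mpoly k[n]}) (s : seq 'I_n).

Lemma partial_pow0 s : partial_pow (0 : {mpoly k[n]}) s = 0.
Proof. by elim: s => //= i s ->; rewrite mderiv0. Qed.

Lemma partial_pow_rcons f s i :
  partial_pow f (rcons s i) = partial_pow (mderiv i f) s.
Proof. exact: foldr_rcons. Qed.

Lemma S_le_mderiv_eq0 f r : (forall i, mderiv i f = 0) -> S_le r f.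
Proof.
move=> df0 t; have : size t = r.+1 by rewrite size_tuple.
by case/lastP: (tval t) => // s i _; rewrite partial_pow_rcons df0 partial_pow0.
Qed.

Lemma in_Sum_le_mcoeff f r (m : 'X_{1..n}) :
  in_Sum_le r f -> (r < mdeg m)%N -> f@_m = 0.
Proof.
case=> g [homg ->] lt_r_m; rewrite raddf_sum big1 // => i _.
apply: dhomog_nemf_coeff (homg i) _; rewrite neq_ltn.
by rewrite (leq_trans (ltn_ord i)) ?orbT.
Qed.

End IteratedDerivatives.

Theorem proposition7p7 (k : fieldType) (p : nat) (hp : p \in [pchar k])
  (n : nat) (hn : (0 < n)%N) (r : nat) :
  ~ (forall f : {mpoly k[n]}, S_le r f <-> in_Sum_le r f).
Proof.
move=> S_le_eq.
pose m : 'X_{1..n} := (U_(Ordinal hn) *+ r.+1 *+ p)%MM.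
have S_le_Xm : S_le r ('X_[m] : {mpoly k[n]}).
  by apply: S_le_mderiv_eq0 => i; rewrite mderivXMn_pchar.
have deg_m : (r < mdeg m)%N.
  by rewrite !mdegMn mdeg1 mul1n leq_pmulr // prime_gt0 // (pcharf_prime hp).
have := in_Sum_le_mcoeff _ _ _ ((S_le_eq _).1 S_le_Xm) deg_m.
by rewrite mcoeffX eqxx; apply/eqP; rewrite oner_eq0.
Qed.
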